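(* Fix an integer $d\ge 2$ and for $k\ge2$ let $G_k=\prod_{i=1}^d P_k$ be the $d$-dimensional grid with all sides of $k$ vertices. There are constants $a_1,a_2,b_1,b_2>0$, depending only on $d$, such that for all $k\ge2$: $$a_1k\le\mathrm{bdim}(G_k)\le a_2k, \qquad b_1k^d\le\mathrm{adim}(G_k)\le b_2k^d.$$ Moreover, the ratios $\mathrm{adim}(G)/\mathrm{bdim}(G)$ and $\mathrm{bdim}(G)/\dim(G)$ are unbounded over connected graphs $G$; in particular, for each fixed $d\ge2$ both tend to infinity along $G_k$ as $k\to\infty$.
   Context: $\prod_{i=1}^d P_k$ is the iterated Cartesian product of $d$ copies of the path $P_k$. $d(x,y)$ denotes graph distance. A set $S\subseteq V(G)$ is a resolving set if for all distinct $x,y$ there is $z\in S$ with $d(x,z)\ne d(y,z)$. $\dim(G)$ is the minimum size of a resolving set. For an integer $k\ge1$ let $d_k(x,y)=\min\{d(x,y),k+1\}$. A set $A\subseteq V(G)$ is an adjacency resolving set if for all distinct $x,y\in V(G)$ there is $z\in A$ with $d_1(x,z)\ne d_1(y,z)$. $\mathrm{adim}(G)$ is the minimum size of an adjacency resolving set. A function $f:V(G)\to\mathbb{Z}_{\ge 0}$ is a resolving broadcast of $G$ if for all distinct $x,y\in V(G)$ there is $z\in V(G)$ with $f(z)=i>0$ and $d_i(x,z)\ne d_i(y,z)$. The broadcast dimension $\mathrm{bdim}(G)$ is the minimum of $\sum_{v\in V(G)}f(v)$ over all resolving broadcasts $f$ of $G$. *)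

From mathcomp Require Import all_boot all_order.
Set Implicit Arguments. Unset Strict Implicit. Unset Printing Implicit Defensive.

Section Graphs.
Variable T : finType.
Variable e : rel T.

Definition simple_graph : Prop := symmetric e /\ irreflexive e.
Definition connected_graph : Prop := forall x y : T, connect e x y.

Fixpoint reach (n : nat) (x y : T) : bool :=
  match n with
  | 0 => x == y
  | n'.+1 => reach n' x y || [exists z, reach n' x z && e z y]
  end.

(* graph distance: least n with a walk of length n from x to y
   (for disconnected pairs it is #|T|; only connected graphs are used) *)
Definition gdist (x y : T) : nat := find (fun n => reach n x y) (iota 0 #|T|).

Definition tdist (k : nat) (x y : T) : nat := minn (gdist x y) k.+1.

Definition resolving (S : {set T}) : bool :=
  [forall x, forall y, (x != y) ==> [exists z in S, gdist x z != gdist y z]].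

Definition adj_resolving (A : {set T}) : bool :=
  [forall x, forall y, (x != y) ==> [exists z in A, tdist 1 x z != tdist 1 y z]].

(* minimum size; the full vertex set is always (adjacency) resolving,
   so #|T| is a valid default *)
Definition metric_dim : nat :=
  \big[minn/#|T|]_(S : {set T} | resolving S) #|S|.
Definition adim : nat :=
  \big[minn/#|T|]_(S : {set T} | adj_resolving S) #|S|.

Definition resolving_broadcast (f : T -> nat) : bool :=
  [forall x, forall y, (x != y) ==>
     [exists z, (0 < f z) && (tdist (f z) x z != tdist (f z) y z)]].

(* there is a resolving broadcast of total cost n (a function with total
   cost n takes values in [0, n], hence the finite encoding) *)
Definition has_rb_cost (n : nat) : bool :=
  [exists f : {ffun T -> 'I_n.+1},
     (\sum_(v : T) nat_of_ord (f v) == n) &&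
     resolving_broadcast (fun v => nat_of_ord (f v))].

(* minimum cost; the all-ones broadcast resolves and costs #|T| *)
Definition bdim : nat :=
  \big[minn/#|T|]_(n < #|T|.+1 | has_rb_cost n) (n : nat).

End Graphs.

Definition path_adj (k : nat) (a b : 'I_k) : bool :=
  (a.+1 == b :> nat) || (b.+1 == a :> nat).

Definition grid_adj (d k : nat) : rel {ffun 'I_d -> 'I_k} :=
  fun x y => [exists i, path_adj (x i) (y i) &&
                         [forall j, (j != i) ==> (x j == y j)]].
Arguments grid_adj d k : clear implicits.

(* Grid distance is the L1 distance between coordinate vectors, so the ball
   of radius r in G_k has at most (2r+1)^d vertices.  The lower bounds rest on
   one general covering fact: if every pair of distinct vertices x, y is
   separated by the truncated distance d_{r z} to some z, then the balls
   B(z, r z) cover every vertex except at most one.  For a resolving broadcast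
   of cost n this gives k^d <= (3n)^d + 1, hence k <= 4n; for an adjacency
   resolving set A it gives k^d <= 3^d |A| + 1.  The upper bounds come from
   the d+1 "corners" (the origin and the unit-direction extreme points), which
   form a resolving set: broadcasting d(k-1) (the diameter) from each corner
   costs O(k), and adim <= k^d trivially. *)

From mathcomp Require Import all_boot all_order zify.
Set Implicit Arguments. Unset Strict Implicit. Unset Printing Implicit Defensive.
Import Order.TTheory.

Lemma leq_sum_term (I : finType) (F : I -> nat) i : F i <= \sum_j F j.
Proof. by rewrite (bigD1 i) //= leq_addr. Qed.

Lemma expn_superadd d a b : 0 < d -> a ^ d + b ^ d <= (a + b) ^ d.
Proof.
case: d => // d _; elim: d => [|d IH]; first by rewrite !expn1.
rewrite !(expnS _ d.+1) mulnDl.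
by apply: leq_add; apply: leq_mul => //; rewrite leq_exp2r // ?leq_addr ?leq_addl.
Qed.

Lemma sum_expn_le d (I : finType) (F : I -> nat) : 0 < d ->
  \sum_i F i ^ d <= (\sum_i F i) ^ d.
Proof.
move=> d0; apply: (big_ind2 (fun a b => a <= b ^ d)) => //.
by move=> x1 y1 x2 y2 h1 h2; apply: leq_trans (expn_superadd _ _ d0); apply: leq_add.
Qed.

(* Bernoulli-type bound, used to see that grid distances stay below #|V|. *)
Lemma mul_pred_lt_expn m k : 0 < k -> m * k.-1 < k ^ m.
Proof.
move=> k0; elim: m => [|m IH]; first by rewrite expn0.
have : 0 < k ^ m by rewrite expn_gt0 k0.
rewrite expnS; nia.
Qed.

Section GraphFacts.
Variables (T : finType) (e : rel T).

Lemma reach_connect n x y : reach e n x y -> connect e x y.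
Proof.
elim: n y => [|n IH] y /=; first by move/eqP->.
case/orP; first exact: IH.
by case/existsP=> z /andP[/IH xz ezy]; apply: connect_trans xz (connect1 ezy).
Qed.

Lemma gdist_charact x y n : n < #|T| -> reach e n x y ->
  (forall j, j < n -> ~~ reach e j x y) -> gdist e x y = n.
Proof.
move=> nT rn below; rewrite /gdist; pose P j := reach e j x y.
have hasP : has P (iota 0 #|T|) by apply/hasP; exists n; rewrite ?mem_iota.
have ltT : find P (iota 0 #|T|) < #|T| by rewrite -[X in _ < X](size_iota 0) -has_find.
have := nth_find 0 hasP; rewrite nth_iota // add0n => Pfind.
case: (ltngtP (find P (iota 0 #|T|)) n) => // c.
  by have := below _ c; rewrite /P in Pfind; rewrite Pfind.
by have := before_find 0 c; rewrite nth_iota ?add0n ?(ltn_trans c ltT) // /P rn.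
Qed.

Definition ball (z : T) (r : nat) : {set T} := [set x | gdist e x z <= r].

Lemma card_bigcup_le (I : finType) (P : pred I) (B : I -> {set T}) :
  #|\bigcup_(i | P i) B i| <= \sum_(i | P i) #|B i|.
Proof.
apply: (big_ind2 (fun (S : {set T}) n => #|S| <= n)); first by rewrite cards0.
  by move=> S1 n1 S2 n2 h1 h2; apply: leq_trans (leq_card_setU S1 S2) (leq_add h1 h2).
by [].
Qed.

(* Covering lemma: two vertices outside every ball B(z, r z) are at truncated
   distance r z + 1 from every z, so they cannot be separated. *)
Lemma separating_balls_cover (P : pred T) (r : T -> nat) :
  (forall x y, x != y -> exists2 z, P z & tdist e (r z) x z != tdist e (r z) y z) ->
  #|T| <= #|\bigcup_(z | P z) ball z (r z)| + 1.
Proof.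
move=> sep; rewrite -(cardsC (\bigcup_(z | P z) ball z (r z))) leq_add2l.
apply/card_le1_eqP => x y; rewrite !in_setC => xout yout.
apply/eqP; apply: contraT => /sep [z Pz]; rewrite /tdist.
have far u : u \notin \bigcup_(z | P z) ball z (r z) -> r z < gdist e u z.
  by move=> uout; rewrite ltnNge; apply: contra uout => uz; apply/bigcupP; exists z; rewrite ?inE.
by have := far x xout; have := far y yout; lia.
Qed.

Lemma broadcast_cover (f : T -> nat) : resolving_broadcast e f ->
  #|T| <= #|\bigcup_(z | 0 < f z) ball z (f z)| + 1.
Proof.
move=> rb; apply: separating_balls_cover => x y xy.
by have /existsP[z /andP[]] := implyP (forallP (forallP rb x) y) xy; exists z.
Qed.

Lemma adj_resolving_cover (A : {set T}) : adj_resolving e A ->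
  #|T| <= #|\bigcup_(z in A) ball z 1| + 1.
Proof.
move=> ar; apply: (separating_balls_cover (r := fun=> 1)) => x y xy.
by have /existsP[z /andP[]] := implyP (forallP (forallP ar x) y) xy; exists z.
Qed.

(* Broadcasting the diameter D from every vertex of a resolving set resolves:
   the truncation d_D then coincides with the graph distance. *)
Lemma resolving_broadcast_of_resolving (S : {set T}) D :
  0 < D -> (forall x y, gdist e x y <= D) -> resolving e S ->
  resolving_broadcast e (fun z => if z \in S then D else 0).
Proof.
move=> D0 diam rS; apply/forallP => x; apply/forallP => y; apply/implyP => xy.
have /existsP[z /andP[zS hz]] := implyP (forallP (forallP rS x) y) xy.
apply/existsP; exists z; rewrite zS D0 /tdist.
by have := diam x z; have := diam y z; move: hz; lia.
Qed.

Lemma has_rb_cost_sum (g : T -> nat) : resolving_broadcast e g ->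
  has_rb_cost e (\sum_v g v).
Proof.
move=> rb; set n := \sum_v g v; pose f := [ffun v => inord (g v) : 'I_n.+1].
have fE v : nat_of_ord (f v) = g v by rewrite ffunE inordK // ltnS leq_sum_term.
apply/existsP; exists f; apply/andP; split.
  by rewrite (eq_bigr _ (fun v _ => fE v)).
apply/forallP => x; apply/forallP => y; apply/implyP => xy.
have /existsP[z] := implyP (forallP (forallP rb x) y) xy.
by rewrite -fE => hz; apply/existsP; exists z.
Qed.

Lemma bigmin_attained (I : finType) (P : pred I) (F : I -> nat) m (Q : pred nat) :
  Q m -> (forall i, P i -> Q (F i)) -> Q (\big[minn/m]_(i | P i) F i).
Proof. by move=> Qm QF; apply: (big_ind Q) => // a b Qa Qb; rewrite /minn; case: ltnP. Qed.

Lemma bdim_ind (Q : pred nat) : Q #|T| -> (forall n, has_rb_cost e n -> Q n) -> Q (bdim e).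
Proof. by move=> QT Qn; apply: bigmin_attained => // i; apply: Qn. Qed.

Lemma adim_ind (Q : pred nat) : Q #|T| -> (forall A, adj_resolving e A -> Q #|A|) ->
  Q (adim e).
Proof. exact: bigmin_attained. Qed.

Lemma metric_dim_ind (Q : pred nat) : Q #|T| -> (forall S, resolving e S -> Q #|S|) ->
  Q (metric_dim e).
Proof. exact: bigmin_attained. Qed.

Lemma bdim_le n : has_rb_cost e n -> bdim e <= n.
Proof.
move=> hn; case: (ltnP n #|T|.+1) => [nT|/ltnW Tn].
  exact: (@bigmin_le_cond _ nat _ _ (Ordinal nT) (fun i => has_rb_cost e i) (fun i => i : nat) hn).
exact: leq_trans (@bigmin_le_id _ nat _ _ #|T| _ _) Tn.
Qed.

Lemma adim_le_card : adim e <= #|T|.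
Proof. exact: (@bigmin_le_id _ nat). Qed.

Lemma metric_dim_le S : resolving e S -> metric_dim e <= #|S|.
Proof. exact: (@bigmin_le_cond _ nat). Qed.

End GraphFacts.

Definition natdist (a b : nat) : nat := (a - b) + (b - a).

Section GridGeometry.
Variables d k : nat.
Local Notation V := {ffun 'I_d -> 'I_k}.
Local Notation e := (grid_adj d k).

Definition L1 (x y : V) : nat := \sum_(i < d) natdist (x i) (y i).

Lemma L1_triangle (x y z : V) : L1 x z <= L1 x y + L1 y z.
Proof. rewrite /L1 -big_split /=; apply: leq_sum => i _; rewrite /natdist; lia. Qed.

Lemma L1_eq0 (x y : V) : (L1 x y == 0) = (x == y).
Proof.
rewrite /L1 sum_nat_eq0; apply/forallP/eqP => [xy|->]; last by move=> i; rewrite /natdist subnn.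
apply/ffunP => i; apply: val_inj; have := xy i; rewrite /natdist /=; lia.
Qed.

Lemma L1_coord (x y : V) i : natdist (x i) (y i) <= L1 x y.
Proof. exact: (leq_sum_term (fun j => natdist (x j) (y j))). Qed.

Lemma L1_adj (x y : V) : e x y -> L1 x y = 1.
Proof.
case/existsP=> i /andP[xyi /forallP same].
rewrite /L1 (bigD1 i) //= big1 => [|j ji]; last first.
  by have := same j; rewrite ji => /eqP ->; rewrite /natdist subnn.
by move: xyi; rewrite /path_adj /natdist; case/orP => /eqP; lia.
Qed.

(* A neighbour of y one step closer to x: move y one unit towards x along a
   coordinate where they differ. *)
Lemma L1_step (x y : V) : 0 < L1 x y -> exists2 z, e z y & L1 x z = (L1 x y).-1.
Proof.
move=> pos; have [i xyi] : exists i, x i != y i.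
  apply/existsP; apply: contraTT pos => /existsPn same.
  rewrite -leqNgt leqn0 L1_eq0; apply/eqP/ffunP => i; exact/eqP/negbNE/same.
have {}xyi : (x i : nat) != y i by [].
pose v := if (x i : nat) < y i then (y i).-1 else (y i).+1.
have vk : v < k.
  by rewrite /v; have := ltn_ord (x i); have := ltn_ord (y i); case: (ltnP (x i) (y i)); lia.
pose z : V := [ffun j => if j == i then Ordinal vk else y j].
have zi : z i = v :> nat by rewrite ffunE eqxx.
have zj j : j != i -> z j = y j by move=> ji; rewrite ffunE (negbTE ji).
exists z.
  apply/existsP; exists i; apply/andP; split.
    by rewrite /path_adj zi /v; case: (ltnP (x i) (y i)); lia.
  by apply/forallP => j; apply/implyP => ji; rewrite zj.
rewrite /L1 (bigD1 i) //= [in RHS](bigD1 i) //=.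
have -> : \sum_(j < d | j != i) natdist (x j) (z j) = \sum_(j < d | j != i) natdist (x j) (y j).
  by apply: eq_bigr => j ji; rewrite zj.
move: (\sum_(j < d | j != i) natdist (x j) (y j)) => rest.
by rewrite zi /natdist /v; case: (ltnP (x i) (y i)); lia.
Qed.

Lemma reach_L1 n (x y : V) : reach e n x y = (L1 x y <= n).
Proof.
elim: n x y => [|n IH] x y /=; first by rewrite leqn0 L1_eq0.
apply/idP/idP.
  case/orP=> [|/existsP[z /andP[]]]; rewrite IH; first exact: leqW.
  move=> xz /L1_adj zy; apply: leq_trans (L1_triangle x z y) _; by rewrite zy addn1.
move=> xy; case: (leqP (L1 x y) n) => [xyn|nxy]; first by rewrite IH xyn.
have [z zy xz] := L1_step (leq_ltn_trans (leq0n n) nxy).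
by apply/orP; right; apply/existsP; exists z; rewrite zy andbT IH xz; lia.
Qed.

Lemma L1_le_diam (x y : V) : L1 x y <= d * k.-1.
Proof.
rewrite -[d in d * _]card_ord -sum_nat_const; apply: leq_sum => i _.
by have := ltn_ord (x i); have := ltn_ord (y i); rewrite /natdist; lia.
Qed.

Lemma card_grid : #|V| = k ^ d.
Proof. by rewrite card_ffun !card_ord. Qed.

Lemma gdist_L1 (x y : V) : 0 < k -> gdist e x y = L1 x y.
Proof.
move=> k0; apply: gdist_charact; last by move=> j; rewrite reach_L1 -ltnNge.
  by rewrite card_grid; apply: leq_ltn_trans (L1_le_diam x y) (mul_pred_lt_expn d k0).
by rewrite reach_L1.
Qed.

Lemma grid_simple : simple_graph e.
Proof.
split; last by move=> x; apply/negbTE/existsP => -[i /andP[]]; rewrite /path_adj; lia.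
move=> x y; apply/idP/idP => /existsP[i /andP[xyi same]]; apply/existsP; exists i;
  (apply/andP; split; first by rewrite /path_adj orbC);
  by apply/forallP => j; apply/implyP => ji; rewrite eq_sym (implyP (forallP same j) ji).
Qed.

Lemma grid_connected : connected_graph e.
Proof. by move=> x y; apply: (@reach_connect _ _ (L1 x y)); rewrite reach_L1. Qed.

(* A ball of radius r in the grid has at most (2r+1)^d vertices: the offsets
   x i + r - z i determine x and lie in [0, 2r]. *)
Lemma card_grid_ball (z : V) r : 0 < k -> #|ball e z r| <= (2 * r).+1 ^ d.
Proof.
move=> k0; pose off (x : V) : {ffun 'I_d -> 'I_(2 * r).+1} := [ffun i => inord (x i + r - z i)].
have near (x : V) : x \in ball e z r -> forall i, x i + r - z i <= 2 * r /\ z i <= x i + r.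
  move=> xz i; move: xz; rewrite inE gdist_L1 // => /(leq_trans (L1_coord x z i)).
  by rewrite /natdist => ?; split; lia.
rewrite -(card_in_imset (f := off)); last first.
  move=> x y /near xz /near yz /ffunP offxy; apply/ffunP => i; apply: val_inj.
  have := congr1 val (offxy i); rewrite !ffunE /=.
  have [? ?] := xz i; have [? ?] := yz i; rewrite !inordK ?ltnS //; lia.
by apply: leq_trans (max_card _) _; rewrite card_ffun !card_ord.
Qed.

End GridGeometry.

Section GridLowerBounds.
Variables d k : nat.
Hypothesis k0 : 0 < k.
Local Notation V := {ffun 'I_d -> 'I_k}.
Local Notation e := (grid_adj d k).

(* Balls of radius f z around the broadcasting vertices cover all but one
   vertex, and together have at most sum (3 f z)^d <= (3 cost)^d vertices. *)
Lemma grid_broadcast_lower (f : V -> nat) : 0 < d -> resolving_broadcast e f ->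
  k ^ d <= (3 * \sum_v f v) ^ d + 1.
Proof.
move=> d0 /broadcast_cover; rewrite card_grid => /leq_trans; apply; rewrite leq_add2r.
apply: leq_trans (card_bigcup_le _ _) _; rewrite big_distrr /=.
apply: leq_trans (sum_expn_le _ d0); rewrite big_mkcond /=.
apply: leq_sum => v _; case: ifP => // fv.
by apply: leq_trans (card_grid_ball _ _ k0) _; rewrite leq_exp2r //; lia.
Qed.

Lemma grid_adj_resolving_lower (A : {set V}) : adj_resolving e A ->
  k ^ d <= 3 ^ d * #|A| + 1.
Proof.
move=> /adj_resolving_cover; rewrite card_grid => /leq_trans; apply; rewrite leq_add2r.
apply: leq_trans (card_bigcup_le _ _) _.
by rewrite mulnC -sum_nat_const; apply: leq_sum => a _; apply: card_grid_ball.
Qed.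

End GridLowerBounds.

Section Corners.
Variables d m : nat.
Local Notation k := m.+1.
Local Notation V := {ffun 'I_d -> 'I_k}.
Local Notation e := (grid_adj d k).

Definition origin : V := [ffun _ => ord0].
Definition axis_end (j : 'I_d) : V := [ffun i => if i == j then ord_max else ord0].
Definition corners : {set V} := origin |: [set axis_end j | j : 'I_d].

(* Distances to origin and to the j-th axis end determine the j-th coordinate. *)
Lemma L1_axis_end (x : V) j : L1 x (axis_end j) + 2 * x j = L1 x origin + m.
Proof.
rewrite /L1 (bigD1 j) //= [in RHS](bigD1 j) //=.
have -> : \sum_(i < d | i != j) natdist (x i) (axis_end j i) =
          \sum_(i < d | i != j) natdist (x i) (origin i).
  by apply: eq_bigr => i ij; rewrite !ffunE (negbTE ij).
move: (\sum_(i < d | i != j) natdist (x i) (origin i)) => rest.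
by rewrite !ffunE eqxx /natdist /=; have := ltn_ord (x j); lia.
Qed.

Lemma corners_resolving : resolving e corners.
Proof.
apply/forallP => x; apply/forallP => y; apply/implyP; apply: contraNT => /existsPn same.
have sameL1 z : z \in corners -> L1 x z = L1 y z.
  by move=> zc; have := same z; rewrite zc negbK !gdist_L1 // => /eqP.
apply/eqP/ffunP => j; apply: val_inj => /=.
have hj : axis_end j \in corners by rewrite !inE imset_f ?orbT.
have := sameL1 _ (setU11 _ _); have := sameL1 _ hj.
by have := L1_axis_end x j; have := L1_axis_end y j; lia.
Qed.

Lemma card_corners : #|corners| <= d.+1.
Proof.
rewrite cardsU1 -[d.+1]add1n; apply: leq_add; first exact: leq_b1.
by apply: leq_trans (leq_imset_card axis_end _) _; rewrite card_ord.
Qed.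

Lemma corners_broadcast_cost : 0 < d -> 0 < m -> bdim e <= d.+1 * (d * m).
Proof.
move=> d0 m0; set D := d * m.
have rb : resolving_broadcast e (fun z => if z \in corners then D else 0).
  apply: resolving_broadcast_of_resolving corners_resolving; first by rewrite muln_gt0 d0.
  by move=> x y; rewrite gdist_L1 //; apply: L1_le_diam.
apply: leq_trans (bdim_le (has_rb_cost_sum rb)) _.
by rewrite -big_mkcond /= sum_nat_const leq_mul2r card_corners orbT.
Qed.

End Corners.

Section GridDimensions.
Variables d m : nat.
Hypothesis d2 : 1 < d.
Local Notation k := m.+2.
Local Notation e := (grid_adj d k).

Lemma sq_le_expn : k * k <= k ^ d.
Proof. by rewrite -{1 2}(expn1 k) -expnD leq_pexp2l. Qed.

Lemma bdim_lower : k <= 4 * bdim e.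
Proof.
apply: (bdim_ind (Q := fun b => k <= 4 * b)) => [|n /existsP[f /andP[/eqP cost rb]]] /=.
  by rewrite card_grid; have := sq_le_expn; nia.
have := grid_broadcast_lower (ltn0Sn _) (ltnW d2) rb; rewrite cost => lb.
have := expn_superadd (3 * n) 1 (ltnW d2); rewrite exp1n => sup.
have := leq_trans lb sup; rewrite leq_exp2r ?(ltnW d2) //; lia.
Qed.

Lemma bdim_upper : bdim e <= d.+1 * d * k.
Proof.
apply: leq_trans (corners_broadcast_cost (ltnW d2) (ltn0Sn m)) _.
by rewrite -mulnA leq_mul2l leq_mul2l ltnW ?orbT.
Qed.

Lemma adim_lower : k ^ d <= 2 * 3 ^ d * adim e.
Proof.
apply: (adim_ind (Q := fun a => k ^ d <= 2 * 3 ^ d * a)) => [|A /grid_adj_resolving_lower lb] /=.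
  by rewrite card_grid leq_pmull // muln_gt0 expn_gt0.
have := lb (ltn0Sn _); have := sq_le_expn; move: (3 ^ d) #|A| (m.+2 ^ d) => t a kd; nia.
Qed.

Lemma adim_upper : adim e <= k ^ d.
Proof. by rewrite -card_grid adim_le_card. Qed.

Lemma metric_dim_upper : metric_dim e <= d.+1.
Proof. exact: leq_trans (metric_dim_le (corners_resolving d m.+1)) (card_corners d m.+1). Qed.

(* The grid has distinct vertices, so any resolving set is non-empty. *)
Lemma metric_dim_pos : 0 < metric_dim e.
Proof.
apply: (metric_dim_ind (Q := fun s => 0 < s)) => [|S rS] /=; first by rewrite card_grid expn_gt0.
have j : 'I_d := Ordinal (ltnW d2).
have /existsP[z /andP[zS _]] :
    [exists z in S, gdist e (origin d m.+1) z != gdist e (axis_end m.+1 j) z].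
  apply: (implyP (forallP (forallP rS _) _)); apply/eqP => /ffunP /(_ j) /(congr1 val).
  by rewrite !ffunE eqxx.
by apply/card_gt0P; exists z.
Qed.

End GridDimensions.

(* For d >= 2 both ratios adim/bdim and bdim/dim exceed any bound N on large
   grids: adim >= k^2 / (2 3^d) dominates N bdim <= N d(d+1) k, and
   bdim >= k/4 dominates N dim <= N (d+1). *)
Lemma grid_ratios_unbounded d N : 1 < d -> exists K, forall k, K <= k ->
  N * bdim (grid_adj d k) < adim (grid_adj d k) /\
  N * metric_dim (grid_adj d k) < bdim (grid_adj d k).
Proof.
move=> d2; set C := 2 * 3 ^ d; set D := d.+1 * d.
exists ((C * D + 4 * d.+1) * N + 2) => -[|[|m]] Kk; try lia.
have C0 : 0 < C by rewrite muln_gt0 expn_gt0.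
have := bdim_lower m d2; have := bdim_upper m d2; have := adim_lower m d2.
have := sq_le_expn m d2; have := metric_dim_upper d m; rewrite -/C -/D.
move: (bdim _) (adim _) (metric_dim _) (m.+2 ^ d) => b a md kd md_ub kk_le a_lb b_ub b_lb.
split; last by nia.
rewrite -(ltn_pmul2l C0); nia.
Qed.

From Stdlib Require Import Reals Lra.

Section RealTransfer.
Local Open Scope R_scope.

Lemma INR_expn (a n : nat) : INR (expn a n) = INR a ^ n.
Proof. by elim: n => [|n IH]; rewrite ?expn0 // expnS mult_INR IH. Qed.

Lemma INR_pos (n : nat) : (0 < n)%nat -> 0 < INR n.
Proof. by move=> n0; apply: lt_0_INR; apply/ssrnat.ltP. Qed.

Lemma INR_le_mul (m n c : nat) : (n <= c * m)%nat -> INR n <= INR c * INR m.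
Proof. by move=> nm; rewrite -mult_INR; apply: le_INR; apply/ssrnat.leP. Qed.

Lemma INR_le_div (m n c : nat) : (0 < c)%nat -> (m <= c * n)%nat -> / INR c * INR m <= INR n.
Proof.
move=> c0 /INR_le_mul mn; have := INR_pos c0 => cpos.
apply: (Rmult_le_reg_l (INR c)) => //; rewrite -Rmult_assoc Rinv_r; lra.
Qed.

Lemma INR_ratio_gt (M : R) (N a b : nat) : (0 < b)%nat -> (N * b < a)%nat ->
  M <= INR N -> M < INR a / INR b.
Proof.
move=> b0 /ssrnat.ltP /lt_INR; rewrite mult_INR => Nba MN; have := INR_pos b0 => bpos.
apply: (Rmult_lt_reg_r (INR b)) => //; rewrite /Rdiv Rmult_assoc Rinv_l; nra.
Qed.

End RealTransfer.

Lemma grid_bounds_real d : (1 < d)%nat ->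
  exists a1 a2 b1 b2 : R,
    (0 < a1)%R /\ (0 < a2)%R /\ (0 < b1)%R /\ (0 < b2)%R /\
    forall k : nat, (2 <= k)%nat ->
      (a1 * INR k <= INR (bdim (grid_adj d k)))%R /\
      (INR (bdim (grid_adj d k)) <= a2 * INR k)%R /\
      (b1 * INR k ^ d <= INR (adim (grid_adj d k)))%R /\
      (INR (adim (grid_adj d k)) <= b2 * INR k ^ d)%R.
Proof.
move=> d2; have C0 : (0 < 2 * expn 3 d)%nat by rewrite muln_gt0 expn_gt0.
exists (/ INR 4)%R, (INR (d.+1 * d)), (/ INR (2 * expn 3 d))%R, 1%R.
split; first by apply: Rinv_0_lt_compat; apply: INR_pos.
split; first by apply: INR_pos; rewrite muln_gt0 /= (ltnW d2).
split; first by apply: Rinv_0_lt_compat; apply: INR_pos.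
split; first exact: Rlt_0_1.
case=> [|[|m]] // _; rewrite -INR_expn Rmult_1_l.
split; first exact: INR_le_div (bdim_lower m d2).
split; first exact: INR_le_mul (bdim_upper m d2).
split; first exact: INR_le_div (adim_lower m d2).
by apply: le_INR; apply/ssrnat.leP; apply: adim_upper.
Qed.

Lemma grid_ratios_real d : (1 < d)%nat ->
  forall M : R, exists K : nat, forall k : nat, (K <= k)%nat ->
  (M < INR (adim (grid_adj d k)) / INR (bdim (grid_adj d k)))%R /\
  (M < INR (bdim (grid_adj d k)) / INR (metric_dim (grid_adj d k)))%R.
Proof.
move=> d2 M; have [N MN] := INR_unbounded M.
have [K ratios] := grid_ratios_unbounded N d2; exists (K + 2)%nat => k Kk.
have [b_ratio md_ratio] := ratios k (leq_trans (leq_addr 2 K) Kk).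
case: k Kk b_ratio md_ratio => [|[|m]] Kk b_ratio md_ratio; try by rewrite addn2 in Kk.
have b0 : (0 < bdim (grid_adj d m.+2))%nat by have := bdim_lower m d2; lia.
by split; apply: (INR_ratio_gt (N := N)); rewrite ?metric_dim_pos //; apply: Rlt_le.
Qed.

Theorem theorem5p4 :
  (forall d : nat, (2 <= d)%N ->
     (exists a1 a2 b1 b2 : R,
        (0 < a1)%R /\ (0 < a2)%R /\ (0 < b1)%R /\ (0 < b2)%R /\
        forall k : nat, (2 <= k)%N ->
          (a1 * INR k <= INR (bdim (grid_adj d k)))%R /\
          (INR (bdim (grid_adj d k)) <= a2 * INR k)%R /\
          (b1 * INR k ^ d <= INR (adim (grid_adj d k)))%R /\
          (INR (adim (grid_adj d k)) <= b2 * INR k ^ d)%R)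
     /\
     (forall M : R, exists K : nat, forall k : nat, (K <= k)%N ->
        (M < INR (adim (grid_adj d k)) / INR (bdim (grid_adj d k)))%R /\
        (M < INR (bdim (grid_adj d k)) / INR (metric_dim (grid_adj d k)))%R))
  /\
  (forall M : R, exists (T : finType) (e : rel T),
     simple_graph e /\ connected_graph e /\
     (M < INR (adim e) / INR (bdim e))%R)
  /\
  (forall M : R, exists (T : finType) (e : rel T),
     simple_graph e /\ connected_graph e /\
     (M < INR (bdim e) / INR (metric_dim e))%R).
Proof.
split; first by move=> d d2; split; [exact: grid_bounds_real | exact: grid_ratios_real].
have planar M : exists K, (M < INR (adim (grid_adj 2 K)) / INR (bdim (grid_adj 2 K)))%R /\
    (M < INR (bdim (grid_adj 2 K)) / INR (metric_dim (grid_adj 2 K)))%R.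
  by have [K ratios] := grid_ratios_real (leqnn 2) M; exists K; apply: ratios.
have grid2 K : simple_graph (grid_adj 2 K) /\ connected_graph (grid_adj 2 K).
  by split; [exact: grid_simple | exact: grid_connected].
by split=> M; have [K [??]] := planar M; have [??] := grid2 K;
  exists {ffun 'I_2 -> 'I_K}, (grid_adj 2 K).
Qed.
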